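(* Let $\rho$ be a state of a $d$-dimensional system ($d<\infty$), let $A,B$ be two copies with $\rho_A=\rho_B=\rho$, and let $j$ be an integer with $1\le j\le d-1$. For each $c$, let $d^{(j,c)}:=\dim\mathcal{V}^{(j,c)}_{\rm in}$ where $\mathcal{V}^{(j,c)}_{\rm in}:=\mathrm{span}\{|n+j,m\rangle\langle n,m|: n+m=c\}$ (over $n,n+j,m\in\{0,\dots,d-1\}$). Then $$\Delta M_A^{(j)}\le\sum_{c=0}^{2d-2-j}\big\|\Pi_{c+j}(\rho\otimes\rho)^{(j)}\Pi_c\big\|_{d^{(j,c)}\text{-KF}}-\|\rho^{(j)}\|_1.$$
   Context: Local observable $L=\sum_{n=0}^{d-1}n|n\rangle\langle n|$, $L_{AB}=L\otimes\mathbb{I}+\mathbb{I}\otimes L=\sum_{c=0}^{2d-2}c\,\Pi_c$, where $\Pi_c$ is the projector onto the eigenvalue-$c$ eigenspace of $L_{AB}$. Single-system mode: $\rho^{(j)}:=\sum_n|n+j\rangle\langle n+j|\rho|n\rangle\langle n|$ (out-of-range terms omitted); bipartite mode: $X^{(j)}:=\sum_c\Pi_{c+j}X\Pi_c$. $M^{(j)}(\sigma):=\|\sigma^{(j)}\|_1$. $\Delta M_A^{(j)}:=\max_{V_{AB}}M^{(j)}(\sigma_A)-M^{(j)}(\rho)$, $\sigma_A=\mathrm{tr}_B[V_{AB}(\rho\otimes\rho)V_{AB}^\dagger]$, maximum over unitaries with $[V_{AB},L_{AB}]=0$. $\|P\|_{\alpha\text{-KF}}$ is the sum of the $\alpha$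 largest singular values of $P$. *)

(* Complex scalars: an arbitrary numClosedFieldType C
   (e.g. R[i] for a real closed field R, or algC). *)
From HB Require Import structures.
From mathcomp Require Import all_boot all_order all_algebra.
Set Implicit Arguments. Unset Strict Implicit. Unset Printing Implicit Defensive.
Import Order.TTheory GRing.Theory Num.Theory.
Local Open Scope ring_scope.

Section Defs.
Variable C : numClosedFieldType.

Definition adj m n (A : 'M[C]_(m, n)) : 'M[C]_(n, m) := (map_mx (fun z => z^*) A)^T.

Definition psd n (A : 'M[C]_n) : Prop :=
  forall v : 'cV[C]_n, 0 <= (adj v *m A *m v) 0 0.

Definition density n (A : 'M[C]_n) : Prop := psd A /\ \tr A = 1.

Definition unitary n (U : 'M[C]_n) : Prop := U *m adj U = 1%:M.

(* eigenvalues (with multiplicity) = roots of the characteristic polynomial *)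
Definition eigvals n (A : 'M[C]_n) : seq C :=
  sval (closed_field_poly_normal (char_poly A)).

Definition singvals m n (A : 'M[C]_(m, n)) : seq C :=
  map (fun z : C => sqrtC z) (eigvals (adj A *m A)).

Definition trnorm m n (A : 'M[C]_(m, n)) : C := \sum_(s <- singvals A) s.

Definition kyfan (alpha : nat) m n (A : 'M[C]_(m, n)) : C :=
  \sum_(s <- take alpha (sort (fun x y => y <= x) (singvals A))) s.

Variable d : nat.
Definition D2 := #|{: 'I_d * 'I_d}|.
Definition pr (k : 'I_D2) : 'I_d * 'I_d := enum_val k.
Definition ix (ab : 'I_d * 'I_d) : 'I_D2 := enum_rank ab.

(* eigenvalue of L_AB = L (x) 1 + 1 (x) L on |a,b> *)
Definition Lval (ab : 'I_d * 'I_d) : nat := ab.1 + ab.2.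

Definition LAB : 'M[C]_D2 := \matrix_(k, l) ((k == l)%:R * (Lval (pr k))%:R).

Definition Pi (c : nat) : 'M[C]_D2 :=
  \matrix_(k, l) ((k == l) && (Lval (pr k) == c))%:R.

Definition tens (A B : 'M[C]_d) : 'M[C]_D2 :=
  \matrix_(k, l) (A (pr k).1 (pr l).1 * B (pr k).2 (pr l).2).

Definition ptraceB (X : 'M[C]_D2) : 'M[C]_d :=
  \matrix_(i, i') \sum_(b : 'I_d) X (ix (i, b)) (ix (i', b)).

(* single-system mode  rho^(j) = sum_n |n+j><n+j| rho |n><n| *)
Definition mode1 (j : nat) (rho : 'M[C]_d) : 'M[C]_d :=
  \matrix_(a, b) (if (a : nat) == (b + j)%N then rho a b else 0).

Definition mode2 (j : nat) (X : 'M[C]_D2) : 'M[C]_D2 :=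
  \sum_(c < (2 * d).-1) (Pi (c + j) *m X *m Pi c).

Definition Mj (j : nat) (sigma : 'M[C]_d) : C := trnorm (mode1 j sigma).

(* |n+j, m><n, m|  (zero if n+j is out of range, i.e. such terms are absent) *)
Definition shiftop (j : nat) (ab : 'I_d * 'I_d) : 'M[C]_D2 :=
  match (insub (ab.1 + j)%N : option 'I_d) with
  | Some a' => delta_mx (ix (a', ab.2)) (ix ab)
  | None => 0
  end.

(* rows spanning V_in^(j,c) = span{ |n+j,m><n,m| : n+m = c } *)
Definition Vin_gen (j c : nat) : 'M[C]_(D2, D2 * D2) :=
  \matrix_(k < D2) (if Lval (pr k) == c then mxvec (shiftop j (pr k)) else 0).

Definition dimVin (j c : nat) : nat := \rank (Vin_gen j c).

End Defs.

(* The trace norm of Y equals |tr(M Y)| for a contraction M (M = Q U† from a singular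
   value decomposition Y Q = U Σ).  For Y the j-th mode of tr_B[V (ρ⊗ρ) V†], the partial
   trace turns tr(M Y) into tr((M⊗1) (V X V†)^(j)) with X = ρ⊗ρ.  As V commutes with L_AB it
   commutes with every Π_c, so (V X V†)^(j) = V X^(j) V† = Σ_c V Π_(c+j) X Π_c V†.  In the
   c-th term only the rows of M⊗1 at the kets |n,m> with n+m = c, n+j < d, and the columns at
   their shifts |n+j,m>, survive; there are at most d^(j,c) such kets, so the term is
   tr(A G B Y_c) with Y_c = Π_(c+j) X^(j) Π_c, G = M⊗1 a contraction, and A, B contractions
   whose squared Frobenius norms are at most d^(j,c).  In a singular basis of Y_c this trace
   is Σ_i w_i σ_i with |w_i| <= a_i, 0 <= a_i <= 1 and Σ_i a_i <= d^(j,c) (AM-GM on the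
   diagonal), and such a weighted sum is at most the sum of the d^(j,c) largest σ_i. *)

From HB Require Import structures.
From mathcomp Require Import all_boot all_order all_algebra.
From mathcomp Require Import zify.
Set Implicit Arguments. Unset Strict Implicit. Unset Printing Implicit Defensive.
Import Order.TTheory GRing.Theory Num.Theory.
Local Open Scope ring_scope.

Section KyFan.
Variable C : numClosedFieldType.

Definition excess (t x : C) : C := if t <= x then x - t else 0.

Lemma weighted_sum_le_excess (I : finType) (a σ : I -> C) (r : nat) (t : C) :
  0 <= t -> (forall i, 0 <= σ i) -> (forall i, 0 <= a i <= 1) ->
  \sum_i a i <= r%:R ->
  \sum_i a i * σ i <= \sum_i excess t (σ i) + t * r%:R.
Proof.
move=> t0 σ0 a01 suma.
apply: (@le_trans _ _ (\sum_i (excess t (σ i) + a i * t))).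
  apply: ler_sum => i _; have /andP [a0 a1] := a01 i; rewrite /excess.
  case: (real_leP (ger0_real t0) (ger0_real (σ0 i))) => [tσ|σt].
    rewrite -{1}(subrK t (σ i)) mulrDr lerD2r.
    by rewrite -[leRHS]mul1r ler_wpM2r // subr_ge0.
  by rewrite add0r ler_wpM2l // ltW.
by rewrite big_split /= lerD2l -mulr_suml mulrC ler_wpM2l.
Qed.

Lemma sum_take_sorted_excess (s : seq C) (r : nat) :
  sorted (fun x y => y <= x) s -> (forall x, x \in s -> 0 <= x) ->
  \sum_(x <- take r s) x = \sum_(x <- s) excess (nth 0 s r) x + nth 0 s r * r%:R.
Proof.
move=> srt s0; set t := nth 0 s r.
have ge_trans : transitive (fun x y : C => y <= x) by move=> y x z xy yz; exact: le_trans yz xy.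
have le_nth i k : (i <= k < size s)%N -> nth 0 s k <= nth 0 s i.
  move=> /andP [ik ks]; apply: (sorted_leq_nth ge_trans _ 0 srt) => //.
  by rewrite inE (leq_ltn_trans ik ks).
have t_le_take x : x \in take r s -> t <= x.
  move=> /(nthP 0) [k]; rewrite size_take_min leq_min => /andP [kr ks] <-.
  rewrite nth_take //; case: (ltnP r (size s)) => rs.
    by apply: le_nth; rewrite (ltnW kr) rs.
  by rewrite /t nth_default // s0 // mem_nth.
have drop_le_t x : x \in drop r s -> x <= t.
  move=> /(nthP 0) [k]; rewrite size_drop nth_drop => ks <-.
  by apply: le_nth; rewrite leq_addr -ltn_subRL.
have -> : \sum_(x <- s) excess t x = \sum_(x <- take r s) (x - t).
  rewrite -[in LHS](cat_take_drop r s) big_cat /= (big1_seq (drop r s)) ?addr0.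
    by apply: eq_big_seq => x /t_le_take tx; rewrite /excess tx.
  move=> x /andP [_ /drop_le_t xt]; rewrite /excess; case: ifP => // tx.
  by apply/eqP; rewrite subr_eq0 eq_le xt tx.
rewrite sumrB big_const_seq count_predT iter_addr_0.
suff -> : t *+ size (take r s) = t * r%:R by rewrite subrK.
case: (ltnP r (size s)) => rs; first by rewrite (size_takel (ltnW rs)) mulr_natr.
by rewrite /t nth_default // mul0r mul0rn.
Qed.

Lemma weighted_sum_le_kyfan (I : finType) (a σ : I -> C) (r : nat) (s : seq C) :
  perm_eq s [seq σ i | i <- enum I] ->
  (forall i, 0 <= σ i) -> (forall i, 0 <= a i <= 1) -> \sum_i a i <= r%:R ->
  \sum_i a i * σ i <= \sum_(x <- take r (sort (fun x y => y <= x) s)) x.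
Proof.
move=> sσ σ0 a01 suma; set S := sort _ s.
have pS : perm_eq S [seq σ i | i <- enum I] by rewrite /S perm_sort.
have S0 x : x \in S -> 0 <= x by rewrite (perm_mem pS) => /mapP [i _ ->].
have srt : sorted (fun x y => y <= x) S.
  apply: (sort_sorted_in (P := fun x : C => 0 <= x)); last first.
    by apply/allP => x; rewrite (perm_mem sσ) => /mapP [i _ ->].
  by move=> x y x0 y0; rewrite orbC real_leVge // ger0_real.
have t0 : 0 <= nth 0 S r.
  by case: (ltnP r (size S)) => rS; [apply: S0; rewrite mem_nth | rewrite nth_default].
rewrite sum_take_sorted_excess // (perm_big _ pS) big_map big_enum /=.
exact: weighted_sum_le_excess.
Qed.

End KyFan.

Section Adjoint.
Variable C : numClosedFieldType.

Lemma adj_entry m n (A : 'M[C]_(m, n)) i j : adj A i j = (A j i)^*.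
Proof. by rewrite !mxE. Qed.

Lemma adjK m n (A : 'M[C]_(m, n)) : adj (adj A) = A.
Proof. by apply/matrixP => i j; rewrite !adj_entry conjCK. Qed.

Lemma adjM m n p (A : 'M[C]_(m, n)) (B : 'M[C]_(n, p)) :
  adj (A *m B) = adj B *m adj A.
Proof. by rewrite /adj map_mxM trmx_mul. Qed.

Lemma adjB m n (A B : 'M[C]_(m, n)) : adj (A - B) = adj A - adj B.
Proof. by apply/matrixP => i j; rewrite !mxE rmorphB. Qed.

Lemma adj_mx1 n : adj (1%:M : 'M[C]_n) = 1%:M.
Proof. by rewrite /adj map_mx1 trmx1. Qed.

Lemma adj_diag_real n (e : 'rV[C]_n) :
  (forall i, e 0 i \is Num.real) -> adj (diag_mx e) = diag_mx e.
Proof.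
move=> e_real; apply/matrixP => i j; rewrite adj_entry !mxE eq_sym.
by case: eqP => [->|_]; rewrite ?mulr1n ?mulr0n ?conjC0 ?conj_Creal.
Qed.

Lemma mulmx_adj_diag m n (A : 'M[C]_(m, n)) i :
  (A *m adj A) i i = \sum_k `|A i k| ^+ 2.
Proof. by rewrite !mxE; apply: eq_bigr => k _; rewrite adj_entry normCK. Qed.

Lemma adj_mulmx_diag m n (A : 'M[C]_(m, n)) i :
  (adj A *m A) i i = \sum_k `|A k i| ^+ 2.
Proof. by rewrite !mxE; apply: eq_bigr => k _; rewrite adj_entry normCKC. Qed.

Lemma abs_mulmx_diag_le m n (A : 'M[C]_(m, n)) (B : 'M[C]_(n, m)) i :
  `|(A *m B) i i| <= ((A *m adj A) i i + (adj B *m B) i i) / 2.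
Proof.
rewrite mulmx_adj_diag adj_mulmx_diag -big_split /= mulr_suml mxE.
apply: le_trans (ler_norm_sum _ _ _) _; apply: ler_sum => k _.
rewrite normrM ler_pdivlMr ?ltr0n // mulr_natr -subr_ge0 addrAC.
by rewrite -sqrrB real_exprn_even_ge0 // rpredB // normr_real.
Qed.

Lemma char_poly_similar n (A B D : 'M[C]_n) :
  B *m A = 1%:M -> char_poly (B *m D *m A) = char_poly D.
Proof.
move=> BA; rewrite /char_poly /char_poly_mx.
set A' := map_mx polyC A; set B' := map_mx polyC B.
have BA' : B' *m A' = 1%:M by rewrite -map_mxM BA map_mx1.
have -> : 'X%:M - map_mx polyC (B *m D *m A) = B' *m ('X%:M - map_mx polyC D) *m A'.
  rewrite mulmxBr mulmxBl [B' *m 'X%:M]scalar_mxC -[_ *m B' *m A']mulmxA BA' mulmx1.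
  by rewrite -!map_mxM.
by rewrite !det_mulmx mulrAC -det_mulmx BA' det1 mul1r.
Qed.

Lemma psd_gram m n (K : 'M[C]_(m, n)) : psd (K *m adj K).
Proof.
move=> v; have -> : adj v *m (K *m adj K) *m v = (adj v *m K) *m adj (adj v *m K).
  by rewrite adjM adjK !mulmxA.
by rewrite mulmx_adj_diag sumr_ge0 // => k _; rewrite exprn_ge0.
Qed.

Lemma psd_conj m n (P : 'M[C]_(m, n)) (A : 'M[C]_n) :
  psd A -> psd (P *m A *m adj P).
Proof. by move=> A_psd v; have := A_psd (adj P *m v); rewrite adjM adjK !mulmxA. Qed.

Lemma psdD n (A B : 'M[C]_n) : psd A -> psd B -> psd (A + B).
Proof. by move=> A_psd B_psd v; rewrite mulmxDr mulmxDl mxE addr_ge0. Qed.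

Lemma psd_diag_ge0 n (A : 'M[C]_n) i : psd A -> 0 <= A i i.
Proof.
move=> /(_ (delta_mx i 0)).
have -> : adj (delta_mx i 0) = delta_mx 0 i :> 'M[C]_(1, n).
  by apply/matrixP => k l; rewrite adj_entry !mxE conjC_nat andbC.
by rewrite -rowE -colE !mxE.
Qed.

Lemma psd_tr_ge0 n (A : 'M[C]_n) : psd A -> 0 <= \tr A.
Proof. by move=> A_psd; rewrite sumr_ge0 // => i _; exact: psd_diag_ge0. Qed.

Lemma psd_idem n (P : 'M[C]_n) : P *m P = P -> adj P = P -> psd P.
Proof. by move=> PP adjP; rewrite -[P in psd P]PP -{2}adjP; exact: psd_gram. Qed.

Lemma quadformE n (A : 'M[C]_n) (v : 'cV[C]_n) :
  (adj v *m A *m v) 0 0 = \sum_k \sum_l (v k 0)^* * A k l * v l 0.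
Proof.
rewrite mxE; under eq_bigr do rewrite mxE big_distrl /=.
rewrite exchange_big; apply: eq_bigr => k _; apply: eq_bigr => l _.
by rewrite adj_entry.
Qed.

Definition contraction n (M : 'M[C]_n) := psd (1%:M - M *m adj M).

Lemma contraction_diag_le1 n (M : 'M[C]_n) i : contraction M -> (M *m adj M) i i <= 1.
Proof. by move=> /(psd_diag_ge0 i); rewrite !mxE eqxx subr_ge0. Qed.

Lemma contractionM n (A B : 'M[C]_n) :
  contraction A -> contraction B -> contraction (A *m B).
Proof.
move=> cA cB; rewrite /contraction.
have -> : 1%:M - A *m B *m adj (A *m B) =
          (1%:M - A *m adj A) + A *m (1%:M - B *m adj B) *m adj A.
  by rewrite adjM mulmxBr mulmx1 mulmxBl !mulmxA addrA subrK.
exact: psdD cA (psd_conj A cB).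
Qed.

Lemma contraction_idem n (M : 'M[C]_n) :
  (M *m adj M) *m (M *m adj M) = M *m adj M -> contraction M.
Proof.
set P := M *m adj M => PP; have adjP : adj P = P by rewrite adjM adjK.
apply: psd_idem; last by rewrite adjB adj_mx1 adjP.
by rewrite mulmxBl mul1mx mulmxBr mulmx1 PP subrr subr0.
Qed.

Lemma tr_gram_contraction_le m n (A : 'M[C]_(m, n)) (G : 'M[C]_n) :
  contraction G -> \tr (A *m G *m adj (A *m G)) <= \tr (A *m adj A).
Proof.
move=> /(psd_conj A) /psd_tr_ge0.
by rewrite mulmxBr mulmx1 mulmxBl raddfB subr_ge0 adjM !mulmxA.
Qed.

Lemma unitary_adj n (Q : 'M[C]_n) : unitary Q -> unitary (adj Q).
Proof. by rewrite /unitary adjK => /mulmx1C. Qed.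

Lemma contraction_unitary n (Q : 'M[C]_n) : unitary Q -> contraction Q.
Proof. by move=> QQ; apply: contraction_idem; rewrite QQ mulmx1. Qed.

Definition coord_proj n (p : {set 'I_n}) : 'M[C]_n := diag_mx (\row_k (k \in p)%:R).

Lemma coord_proj_idem n (p : {set 'I_n}) : coord_proj p *m coord_proj p = coord_proj p.
Proof.
rewrite mulmx_diag; congr diag_mx; apply/rowP => k; rewrite !mxE.
by case: (k \in p); rewrite ?mulr1 ?mulr0.
Qed.

Lemma adj_coord_proj n (p : {set 'I_n}) : adj (coord_proj p) = coord_proj p.
Proof. by rewrite adj_diag_real // => k; rewrite mxE realn. Qed.

Lemma mxtrace_coord_proj n (p : {set 'I_n}) : \tr (coord_proj p) = #|p|%:R.
Proof.
rewrite mxtrace_diag -sumr_const [RHS]big_mkcond; apply: eq_bigr => k _.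
by rewrite mxE; case: (k \in p).
Qed.

Lemma coord_proj_entry n (p q : {set 'I_n}) (X : 'M[C]_n) k l :
  (coord_proj p *m X *m coord_proj q) k l = (k \in p)%:R * X k l * (l \in q)%:R.
Proof. by rewrite mul_mx_diag mul_diag_mx !mxE. Qed.

Lemma contraction_coord_proj_unitary n (p : {set 'I_n}) (V : 'M[C]_n) :
  unitary V -> contraction (adj V *m coord_proj p).
Proof.
move=> VV; apply: contractionM; first exact/contraction_unitary/unitary_adj.
by apply: contraction_idem; rewrite adj_coord_proj !coord_proj_idem.
Qed.

Lemma mxtrace_unitary_conj n (V M : 'M[C]_n) : unitary V -> \tr (adj V *m M *m V) = \tr M.
Proof. by move=> VV; rewrite mxtrace_mulC mulmxA VV mul1mx. Qed.

End Adjoint.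

Arguments coord_proj {C n} p.

Section SingularValues.
Variable C : numClosedFieldType.

Lemma gram_spectral n (X : 'M[C]_n) : exists (Q : 'M[C]_n) (l : 'rV[C]_n),
  [/\ unitary Q, adj (X *m Q) *m (X *m Q) = diag_mx l
    & perm_eq (eigvals (adj X *m X)) [seq l 0 i | i <- enum 'I_n]].
Proof.
have adjE m p (A : 'M[C]_(m, p)) : adj A = (A ^t*)%sesqui by rewrite /adj map_trmx.
have /orthomx_spectralP : adj X *m X \is normalmx.
  by apply/normalmxP; rewrite -!adjE adjM adjK.
set P := spectralmx _; set l := spectral_diag _ => XX_eq.
have P_unitary : unitary P by rewrite /unitary adjE; apply/unitarymxP/spectral_unitarymx.
have invP : invmx P = adj P by rewrite adjE invmx_unitary // spectral_unitarymx.
exists (adj P), l; split; first exact: unitary_adj.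
  rewrite adjM adjK -mulmxA (mulmxA (adj X)) XX_eq invP !mulmxA P_unitary mul1mx.
  by rewrite -mulmxA P_unitary mulmx1.
rewrite /eigvals; case: closed_field_poly_normal => r /=.
rewrite (monicP (char_poly_monic _)) scale1r => char_eq.
apply: prod_XsubC_eq; rewrite -char_eq big_map big_enum /= XX_eq invP.
rewrite char_poly_similar; last by move: (unitary_adj P_unitary); rewrite /unitary adjK.
rewrite char_poly_trig ?diag_mx_is_trig //.
by apply: eq_bigr => i _; rewrite mxE eqxx mulr1n.
Qed.

Lemma svd n (X : 'M[C]_n) : exists (Q U : 'M[C]_n) (σ : 'I_n -> C),
  [/\ unitary Q, X *m Q = U *m diag_mx (\row_i σ i),
      adj U *m X *m Q = diag_mx (\row_i σ i), contraction U & contraction (adj U)] /\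
  (forall i, 0 <= σ i) /\ perm_eq (singvals X) [seq σ i | i <- enum 'I_n].
Proof.
have [Q [l [QQ gramY l_eig]]] := gram_spectral X.
(* an opaque name for X Q keeps [mxE] from unfolding its entries *)
have [Y YE] : {Y | X *m Q = Y} by exists (X *m Q).
rewrite YE in gramY.
have lE i : l 0 i = \sum_k `|Y k i| ^+ 2.
  by rewrite -adj_mulmx_diag gramY mxE eqxx mulr1n.
pose σ i := sqrtC (l 0 i).
have σ0 i : 0 <= σ i by rewrite sqrtC_ge0 lE sumr_ge0 // => k _; rewrite exprn_ge0.
have Y_col0 i k : σ i = 0 -> Y k i = 0.
  rewrite /σ => /eqP; rewrite sqrtC_eq0 lE => /eqP /psumr_eq0P Y0.
  by apply/eqP; rewrite -normr_eq0 -sqrf_eq0 Y0 // => k' _; rewrite exprn_ge0.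
pose s i := if σ i == 0 then 0 else (σ i)^-1.
pose E : 'M[C]_n := diag_mx (\row_i (σ i != 0)%:R).
pose U := Y *m diag_mx (\row_i s i).
have YU : Y = U *m diag_mx (\row_i σ i).
  apply/matrixP => k i; rewrite mul_mx_diag mxE /U mul_mx_diag !mxE /s.
  by case: (σ i =P 0) => [/Y_col0 ->|/eqP σi]; rewrite ?mul0r ?divfK.
have UU : adj U *m U = E.
  rewrite adjM adj_diag_real => [|i]; last first.
    by rewrite mxE /s; case: eqP => _; rewrite ?real0 // realV ger0_real.
  rewrite -mulmxA (mulmxA (adj Y)) gramY !mulmx_diag; congr diag_mx; apply/rowP => i.
  rewrite !mxE /s -[l 0 i]sqrtCK -/(σ i); case: eqP => [->|/eqP σi]; first by rewrite !mul0r.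
  by rewrite expr2 mulfK // mulVf.
have UE : U *m E = U.
  rewrite -mulmxA mulmx_diag; congr (_ *m diag_mx _); apply/rowP => i.
  by rewrite !mxE /s; case: eqP; rewrite ?mulr0 ?mulr1.
have EE : E *m E = E.
  rewrite mulmx_diag; congr diag_mx; apply/rowP => i.
  by rewrite !mxE; case: (σ i != 0); rewrite ?mulr0 ?mulr1.
exists Q, U, σ; split; [split => // | split => //].
- by rewrite YE.
- rewrite -mulmxA YE {1}YU mulmxA UU mulmx_diag; congr diag_mx; apply/rowP => i.
  by rewrite !mxE; case: eqP => [->|]; rewrite ?mulr0 ?mul1r.
- by apply: contraction_idem; rewrite -mulmxA (mulmxA (adj U)) UU mulmxA UE.
- by apply: contraction_idem; rewrite adjK UU EE.
by rewrite /singvals (map_comp sqrtC (fun i => l 0 i)) perm_map.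
Qed.

Lemma trnorm_attained n (Y : 'M[C]_n) :
  exists2 M : 'M[C]_n, contraction M & trnorm Y = `|\tr (M *m Y)|.
Proof.
have [Q [U [σ [[QQ _ UYQ _ cU'] [σ0 σY]]]]] := svd Y.
exists (Q *m adj U); first exact: contractionM (contraction_unitary QQ) cU'.
rewrite -mulmxA mxtrace_mulC UYQ mxtrace_diag ger0_norm; last first.
  by rewrite sumr_ge0 // => i _; rewrite mxE.
by rewrite /trnorm (perm_big _ σY) big_map big_enum; apply: eq_bigr => i _; rewrite mxE.
Qed.

Lemma abs_diag_weighted_le_kyfan n r (A B X : 'M[C]_n) (σ : 'I_n -> C) :
  contraction A -> contraction (adj B) ->
  \tr (A *m adj A) <= r%:R -> \tr (adj B *m B) <= r%:R ->
  (forall i, 0 <= σ i) -> perm_eq (singvals X) [seq σ i | i <- enum 'I_n] ->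
  `|\sum_i (A *m B) i i * σ i| <= kyfan r X.
Proof.
move=> cA cB trA trB σ0 σX.
have mid_le (x y z : C) : x <= z -> y <= z -> (x + y) / 2 <= z.
  by move=> xz yz; rewrite ler_pdivrMr ?ltr0n // mulr_natr mulr2n lerD.
pose a i := ((A *m adj A) i i + (adj B *m B) i i) / 2.
have a01 i : 0 <= a i <= 1.
  have := contraction_diag_le1 i cB; have := psd_diag_ge0 i (psd_gram (adj B)).
  rewrite adjK => Bi0 Bi1; have Ai0 := psd_diag_ge0 i (psd_gram A).
  by rewrite divr_ge0 ?addr_ge0 //= mid_le // contraction_diag_le1.
have suma : \sum_i a i <= r%:R by rewrite -mulr_suml big_split /= mid_le.
apply: le_trans (weighted_sum_le_kyfan σX σ0 a01 suma).
apply: le_trans (ler_norm_sum _ _ _) _; apply: ler_sum => i _.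
by rewrite normrM (ger0_norm (σ0 i)) ler_wpM2r // abs_mulmx_diag_le.
Qed.

Lemma abs_tr_contraction_le_kyfan n r (A G B X : 'M[C]_n) :
  contraction A -> contraction G -> contraction (adj B) ->
  \tr (A *m adj A) <= r%:R -> \tr (adj B *m B) <= r%:R ->
  `|\tr (A *m G *m B *m X)| <= kyfan r X.
Proof.
move=> cA cG cB trA trB.
have [Q [U [σ [[QQ XQ _ cU cU'] [σ0 σX]]]]] := svd X.
have -> : \tr (A *m G *m B *m X) = \sum_i ((adj Q *m A *m G) *m (B *m U)) i i * σ i.
  rewrite -[X in \tr X]mulmx1 -QQ mulmxA mxtrace_mulC !mulmxA -mulmxA XQ.
  by rewrite mulmxA; apply: eq_bigr => i _; rewrite mul_mx_diag mxE [X in _ * X]mxE.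
apply: abs_diag_weighted_le_kyfan σ0 σX.
- by apply: contractionM => //; apply: contractionM => //; exact/contraction_unitary/unitary_adj.
- by rewrite adjM; exact: contractionM.
- apply: le_trans (tr_gram_contraction_le _ cG) _.
  by rewrite adjM adjK !mulmxA mxtrace_mulC !mulmxA QQ mul1mx.
- rewrite mxtrace_mulC; apply: le_trans (tr_gram_contraction_le B cU) _.
  by rewrite mxtrace_mulC.
Qed.

End SingularValues.

Section Bipartite.
Variables (C : numClosedFieldType) (d : nat).
Local Notation n2 := (D2 d).
Local Notation L k := (Lval (pr k)).

Lemma ixK : cancel (@ix d) (@pr d).
Proof. exact: enum_rankK. Qed.

Lemma prK : cancel (@pr d) (@ix d).
Proof. exact: enum_valK. Qed.

Lemma sum_ix (F : 'I_n2 -> C) : \sum_k F k = \sum_(a : 'I_d) \sum_(b : 'I_d) F (ix (a, b)).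
Proof.
rewrite pair_bigA (reindex (@ix d)) /=; last first.
  by exists (@pr d) => k _; [exact: ixK | exact: prK].
by apply: eq_bigr => -[a b].
Qed.

Lemma tensE (A B : 'M[C]_d) k l : tens A B k l = A (pr k).1 (pr l).1 * B (pr k).2 (pr l).2.
Proof. by rewrite mxE. Qed.

Lemma tensM (A B A' B' : 'M[C]_d) : tens A B *m tens A' B' = tens (A *m A') (B *m B').
Proof.
apply/matrixP => k l; rewrite tensE !mxE sum_ix big_distrlr /=.
by apply: eq_bigr => a _; apply: eq_bigr => b _; rewrite !tensE ixK mulrACA.
Qed.

Lemma adj_tens (A B : 'M[C]_d) : adj (tens A B) = tens (adj A) (adj B).
Proof. by apply/matrixP => k l; rewrite adj_entry !tensE !adj_entry rmorphM. Qed.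

Lemma tens1 : tens 1%:M 1%:M = 1%:M :> 'M[C]_n2.
Proof.
apply/matrixP => k l; rewrite tensE !mxE -natrM mulnb -(inj_eq (can_inj prK)).
by case: (pr k) (pr l) => [a b] [a' b'].
Qed.

Lemma tensBl (A A' B : 'M[C]_d) : tens (A - A') B = tens A B - tens A' B.
Proof. by apply/matrixP => k l; rewrite !mxE mulrBl. Qed.

Lemma psd_tens1 (A : 'M[C]_d) : psd A -> psd (tens A 1%:M).
Proof.
move=> A_psd v; rewrite quadformE sum_ix exchange_big /=; apply: sumr_ge0 => b _.
apply: le_trans (A_psd (\col_a v (ix (a, b)) 0)) _; rewrite quadformE le_eqVlt eq_sym.
apply/orP; left; apply/eqP; apply: eq_bigr => a _; rewrite sum_ix; apply: eq_bigr => a' _.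
rewrite (bigD1 b) //= big1 ?addr0 => [|b' b'b]; rewrite tensE !ixK !mxE /=.
  by rewrite eqxx mulr1.
by rewrite eq_sym (negbTE b'b) mulr0n mulr0 mulr0 mul0r.
Qed.

Lemma contraction_tens1 (M : 'M[C]_d) : contraction M -> contraction (tens M 1%:M).
Proof.
move=> cM; rewrite /contraction adj_tens adj_mx1 tensM mulmx1 -tens1 -tensBl.
exact: psd_tens1.
Qed.

Lemma Lval_lt (k : 'I_n2) : (L k < (2 * d).-1)%N.
Proof. by rewrite /Lval; case: (pr k) => a b /=; have := ltn_ord a; have := ltn_ord b; lia. Qed.

Lemma Pi_coord_proj c : Pi C d c = coord_proj [set k | L k == c].
Proof.
apply/matrixP => k l; rewrite !mxE inE.
by case: (k =P l) => [->|_]; rewrite ?andbF ?mulr0n ?mulr1n.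
Qed.

Lemma Pi_entry a b (X : 'M[C]_n2) k l :
  (Pi C d a *m X *m Pi C d b) k l = (L k == a)%:R * X k l * (L l == b)%:R.
Proof. by rewrite !Pi_coord_proj coord_proj_entry !inE. Qed.

Lemma Pi_idem c : Pi C d c *m Pi C d c = Pi C d c.
Proof. by rewrite Pi_coord_proj coord_proj_idem. Qed.

Lemma Pi_eq0 c : ((2 * d).-1 <= c)%N -> Pi C d c = 0.
Proof.
move=> c_big; apply/matrixP => k l; rewrite !mxE.
by case: (L k =P c) (Lval_lt k) => [->|_]; rewrite ?andbF // ltnNge c_big.
Qed.

Lemma LAB_diag : LAB C d = diag_mx (\row_k (L k)%:R).
Proof.
apply/matrixP => k l; rewrite !mxE.
by case: (k =P l) => [->|_]; rewrite ?mul1r ?mulr1n ?mul0r ?mulr0n.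
Qed.

Lemma LAB_commute_Pi (W : 'M[C]_n2) c :
  W *m LAB C d = LAB C d *m W -> W *m Pi C d c = Pi C d c *m W.
Proof.
move=> /matrixP WL; apply/matrixP => k l; have := WL k l.
rewrite Pi_coord_proj LAB_diag !mul_mx_diag !mul_diag_mx !mxE !inE.
case: (L k =P L l) => [->|/eqP kl]; first by rewrite mulrC => _; rewrite mulrC.
rewrite mulrC => /eqP; rewrite -subr_eq0 -mulrBl mulf_eq0 subr_eq0 eqr_nat eq_sym.
by rewrite (negbTE kl) => /eqP ->; rewrite mulr0 mul0r.
Qed.

Lemma LAB_commute_adj (W : 'M[C]_n2) :
  W *m LAB C d = LAB C d *m W -> adj W *m LAB C d = LAB C d *m adj W.
Proof.
have adjL : adj (LAB C d) = LAB C d by rewrite LAB_diag adj_diag_real // => k; rewrite mxE realn.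
by move=> WL; rewrite -[in LHS]adjL -adjM -WL adjM adjL.
Qed.

Lemma mode2E j (X : 'M[C]_n2) k l : mode2 j X k l = (L k == (L l + j)%N)%:R * X k l.
Proof.
rewrite /mode2 summxE (bigD1 (Ordinal (Lval_lt l))) //= big1 ?addr0 => [|c cl].
  by rewrite Pi_entry eqxx mulr1.
rewrite Pi_entry; case: (L l =P c) => [lc|_]; last by rewrite mulr0.
by move: cl; rewrite -val_eqE /= lc eqxx.
Qed.

Lemma mode2_conj j (V X : 'M[C]_n2) : V *m LAB C d = LAB C d *m V ->
  mode2 j (V *m X *m adj V) = V *m mode2 j X *m adj V.
Proof.
move=> VL; have V'L := LAB_commute_adj VL.
rewrite /mode2 mulmx_sumr mulmx_suml; apply: eq_bigr => c _.
by rewrite !mulmxA -(LAB_commute_Pi _ VL) -mulmxA (LAB_commute_Pi _ V'L) !mulmxA.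
Qed.

Lemma Pi_mode2 j c (X : 'M[C]_n2) :
  Pi C d (c + j) *m mode2 j X *m Pi C d c = Pi C d (c + j) *m X *m Pi C d c.
Proof.
apply/matrixP => k l; rewrite !Pi_entry mode2E.
case: (L k =P (c + j)%N) => [->|_]; last by rewrite !mul0r.
by case: (L l =P c) => [->|_]; rewrite ?mulr0 // eqxx mul1r.
Qed.

Lemma mode2_trunc j (X : 'M[C]_n2) :
  mode2 j X = \sum_(c < (2 * d - 1 - j)%N) Pi C d (c + j) *m X *m Pi C d c.
Proof.
pose F c := Pi C d (c + j) *m X *m Pi C d c.
rewrite /mode2 [RHS](big_ord_widen (2 * d).-1 F); last by lia.
rewrite [RHS]big_mkcond; apply: eq_bigr => c _; case: ifP => // c_big.
by rewrite Pi_eq0 ?mul0mx //; move/negbT: c_big; rewrite -leqNgt; lia.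
Qed.

Lemma mode1_ptraceB_entry j (Z : 'M[C]_n2) a b :
  mode1 j (ptraceB Z) a b = \sum_m (a == (b + j)%N :> nat)%:R * Z (ix (a, m)) (ix (b, m)).
Proof. by rewrite -mulr_sumr !mxE; case: eqP; rewrite ?mul1r ?mul0r. Qed.

Lemma tr_mode1_ptraceB j (M : 'M[C]_d) (Z : 'M[C]_n2) :
  \tr (M *m mode1 j (ptraceB Z)) = \tr (tens M 1%:M *m mode2 j Z).
Proof.
rewrite /mxtrace sum_ix; apply: eq_bigr => a _; rewrite mxE.
under eq_bigr do rewrite mode1_ptraceB_entry mulr_sumr.
rewrite exchange_big /=; apply: eq_bigr => m _; rewrite mxE sum_ix; apply: eq_bigr => b _.
rewrite (bigD1 m) //= big1 ?addr0 => [|m' m'm]; rewrite tensE mode2E !ixK !mxE /=.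
  by rewrite eqxx mulr1 /Lval /= addnAC eqn_add2r.
by rewrite eq_sym (negbTE m'm) mulr0n mulr0 mul0r.
Qed.

End Bipartite.

Section Supports.
Variables (C : numClosedFieldType) (d : nat).
Local Notation n2 := (D2 d).
Local Notation L k := (Lval (pr k)).

(* |n,m> |-> |n+j,m>, meaningful only when n + j < d *)
Definition shift_ix j (k : 'I_n2) : 'I_n2 := ix (insubd (pr k).1 ((pr k).1 + j)%N, (pr k).2).

(* the kets |n,m> of the generators |n+j,m><n,m| of V_in^(j,c) *)
Definition in_support (j c : nat) : {set 'I_n2} := [set k | (L k == c) && ((pr k).1 + j < d)%N].

Definition out_support (j c : nat) : {set 'I_n2} := shift_ix j @: in_support j c.

Lemma shift_ixE j (k : 'I_n2) : ((pr k).1 + j < d)%N ->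
  ((pr (shift_ix j k)).1 : nat) = ((pr k).1 + j)%N /\ (pr (shift_ix j k)).2 = (pr k).2.
Proof. by move=> kj; rewrite ixK /= val_insubd kj. Qed.

Lemma out_support_Lval j c l : l \in out_support j c -> L l = (c + j)%N.
Proof.
case/imsetP => k; rewrite inE => /andP [/eqP <- kj] ->.
by have [e1 e2] := shift_ixE kj; rewrite /Lval e1 e2 addnAC.
Qed.

Lemma shiftop_in_support j c k : k \in in_support j c ->
  shiftop C j (pr k) = delta_mx (shift_ix j k) k.
Proof.
rewrite inE => /andP [_ kj]; rewrite /shiftop; case: insubP => [u _ uE|]; last by rewrite kj.
rewrite prK /shift_ix; congr (delta_mx (ix (_, _)) _).
by apply: val_inj; rewrite val_insubd kj uE.
Qed.

Lemma card_in_support j c : (#|in_support j c| <= dimVin C d j c)%N.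
Proof.
pose f (i : 'I_#|in_support j c|) : 'I_n2 := enum_val i.
pose g i := mxvec_index (shift_ix j (f i)) (f i).
apply: (@mulmx1_min_rank _ _ _ _ _ (rowsub f 1%:M) (colsub g 1%:M)).
rewrite -rowsubE mulmx_colsub mulmx1; apply/matrixP => i i'.
have fi : f i \in in_support j c by exact: enum_valP.
have Lfi : L (f i) = c by move: fi; rewrite inE => /andP [/eqP].
rewrite !mxE Lfi eqxx (shiftop_in_support fi) mxvecE mxE (inj_eq enum_val_inj).
by case: (eqVneq i i') => [->|_]; rewrite ?eqxx ?andbF.
Qed.

Lemma card_out_support j c : (#|out_support j c| <= #|in_support j c|)%N.
Proof. exact: leq_imset_card. Qed.

Lemma supports_pairE j c (k l : 'I_n2) : (pr k).2 = (pr l).2 ->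
  (k \in in_support j c) && (l \in out_support j c) = (L k == c) && (L l == (c + j)%N).
Proof.
move=> kl2; apply/andP/andP => [[k_in /out_support_Lval ->] | [/eqP Lk /eqP Ll]].
  by split=> //; move: k_in; rewrite inE => /andP [].
have kj : ((pr k).1 + j < d)%N by move: Lk Ll (ltn_ord (pr l).1); rewrite /Lval kl2; lia.
have k_in : k \in in_support j c by rewrite inE Lk eqxx kj.
split=> //; apply/imsetP; exists k => //; rewrite /shift_ix -[l]prK; congr ix.
move: Lk Ll kl2; rewrite /Lval; case: (pr l) => a b /= Lk Ll kl2; subst b; congr pair.
by apply: val_inj; rewrite /= val_insubd kj; lia.
Qed.

Lemma coord_proj_tens1 j c (M : 'M[C]_d) :
  coord_proj (in_support j c) *m tens M 1%:M *m coord_proj (out_support j c) =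
  Pi C d c *m tens M 1%:M *m Pi C d (c + j).
Proof.
apply/matrixP => k l; rewrite coord_proj_entry Pi_entry tensE [1%:M _ _]mxE.
case: (eqVneq (pr k).2 (pr l).2) => [kl2|_]; last by rewrite mulr0n !mulr0 !mul0r.
by rewrite !(mulrAC _ _ (_ %:R)) -!natrM !mulnb supports_pairE.
Qed.

End Supports.

Section Blocks.
Variables (C : numClosedFieldType) (d : nat).
Local Notation n2 := (D2 d).

Lemma tr_block_coord_proj j c (V : 'M[C]_n2) (M : 'M[C]_d) (X : 'M[C]_n2) :
  V *m LAB C d = LAB C d *m V ->
  \tr (tens M 1%:M *m (V *m (Pi C d (c + j) *m X *m Pi C d c) *m adj V)) =
  \tr (adj V *m coord_proj (in_support d j c) *m tens M 1%:M *m
       (coord_proj (out_support d j c) *m V) *m (Pi C d (c + j) *m mode2 j X *m Pi C d c)).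
Proof.
move=> VL; have V'L := LAB_commute_adj VL.
set P := Pi C d c; set P' := Pi C d (c + j); set T := tens M 1%:M.
set S := coord_proj (in_support d j c); set S' := coord_proj (out_support d j c).
have -> : adj V *m S *m T *m (S' *m V) = P *m (adj V *m T *m V) *m P'.
  have -> : adj V *m S *m T *m (S' *m V) = adj V *m (S *m T *m S') *m V by rewrite !mulmxA.
  by rewrite /S /S' coord_proj_tens1 !mulmxA (LAB_commute_Pi _ V'L) -!mulmxA (LAB_commute_Pi _ VL).
rewrite Pi_mode2 -/P -/P'; set Y := adj V *m T *m V; set Z := P' *m X *m P.
have P'Z : P' *m Z = Z by rewrite /Z !mulmxA Pi_idem.
have ZP : Z *m P = Z by rewrite /Z -mulmxA Pi_idem.
rewrite [RHS](_ : _ = \tr (Y *m Z)).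
  by rewrite mulmxA mxtrace_mulC /Y /Z !mulmxA.
by rewrite -mulmxA P'Z -mulmxA mxtrace_mulC -mulmxA ZP.
Qed.

Lemma abs_tr_block_le_kyfan j c (V : 'M[C]_n2) (M : 'M[C]_d) (X : 'M[C]_n2) :
  unitary V -> V *m LAB C d = LAB C d *m V -> contraction M ->
  `|\tr (tens M 1%:M *m (V *m (Pi C d (c + j) *m X *m Pi C d c) *m adj V))| <=
  kyfan (dimVin C d j c) (Pi C d (c + j) *m mode2 j X *m Pi C d c).
Proof.
move=> VV VL cM; rewrite tr_block_coord_proj //.
have tr_conj p : \tr (adj V *m coord_proj p *m V) = #|p|%:R.
  by rewrite mxtrace_unitary_conj // mxtrace_coord_proj.
apply: abs_tr_contraction_le_kyfan.
- exact: contraction_coord_proj_unitary.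
- exact: contraction_tens1.
- by rewrite adjM adj_coord_proj; exact: contraction_coord_proj_unitary.
- rewrite adjM adjK adj_coord_proj mulmxA -(mulmxA (adj V)) coord_proj_idem tr_conj ler_nat.
  exact: card_in_support.
- rewrite adjM adj_coord_proj mulmxA -(mulmxA (adj V)) coord_proj_idem tr_conj ler_nat.
  exact: leq_trans (card_out_support _ _ _) (card_in_support _ _ _ _).
Qed.

End Blocks.

Unset Implicit Arguments.

Theorem mainTheorem7 (C : numClosedFieldType) (d : nat) (rho : 'M[C]_d) (j : nat) :
  density rho ->
  (1 <= j <= d - 1)%N ->
  forall V : 'M[C]_(D2 d),
    unitary V ->
    V *m LAB C d = LAB C d *m V ->
    Mj j (ptraceB (V *m tens rho rho *m adj V)) - Mj j rho <=
    \sum_(c < (2 * d - 1 - j)%N)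
        kyfan (dimVin C d j c)
              (Pi C d (c + j) *m mode2 j (tens rho rho) *m Pi C d c)
    - Mj j rho.
Proof.
move=> _ _ V VV VL; rewrite lerD2r /Mj.
have [M cM ->] := trnorm_attained (mode1 j (ptraceB (V *m tens rho rho *m adj V))).
rewrite tr_mode1_ptraceB mode2_conj // [in X in `|X|]mode2_trunc.
rewrite mulmx_sumr mulmx_suml mulmx_sumr raddf_sum /=.
apply: le_trans (ler_norm_sum _ _ _) _; apply: ler_sum => c _.
exact: abs_tr_block_le_kyfan.
Qed.
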